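(* Let $1\le q<2$ and let $\mathbf{x}_k$ be a data point with $\mathbf{x}_k\ne\mathbf{M}$. Then there exists $\delta_0>0$ such that for every $\mathbf{y}\in B(\mathbf{x}_k,\delta_0)\setminus\{\mathbf{x}_k\}$ there is an integer $s\ge1$ (depending on $\mathbf{y}$) with $\mathbf{T}_1^{j}(\mathbf{y})\in B(\mathbf{x}_k,\delta_0)$ for $0\le j\le s-1$ and $\mathbf{T}_1^{s}(\mathbf{y})\notin B(\mathbf{x}_k,\delta_0)$. Here $B(\mathbf{x}_k,\delta_0)$ is the open Euclidean ball and $\mathbf{T}_1^{j}$ is the $j$-fold iterate of $\mathbf{T}_1$.
   Context: Let $\mathbf{x}_1,\dots,\mathbf{x}_m\in\mathbb{R}^d$ be distinct data points, not all lying on a common affine line, and $\eta_1,\dots,\eta_m>0$. $C_q(\mathbf{y})=\sum_{i=1}^m \eta_i^q\|\mathbf{y}-\mathbf{x}_i\|^q$ is strictly convex with unique minimizer $\mathbf{M}$. $\mathbf{T}_1(\mathbf{y})=\frac{\sum_{i} \eta_i^q\|\mathbf{y}-\mathbf{x}_i\|^{q-2}\mathbf{x}_i}{\sum_{i} \eta_i^q\|\mathbf{y}-\mathbf{x}_i\|^{q-2}}$ for $\mathbf{y}\notin\{\mathbf{x}_i\}$, extended by $\mathbf{T}_1(\mathbf{x}_i)=\mathbf{x}_i$. *)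

From HB Require Import structures.
From mathcomp Require Import all_boot all_order all_algebra.
From mathcomp Require Import all_classical all_reals.
From mathcomp Require Import exp.
Set Implicit Arguments. Unset Strict Implicit. Unset Printing Implicit Defensive.
Import Order.TTheory GRing.Theory Num.Theory.
Local Open Scope ring_scope.

Definition enorm (R : realType) (d : nat) (v : 'rV[R]_d) : R :=
  Num.sqrt (\sum_(i < d) v ord0 i ^+ 2).

Definition Cq (R : realType) (d m : nat) (q : R) (x : 'I_m -> 'rV[R]_d)
  (eta : 'I_m -> R) (y : 'rV[R]_d) : R :=
  \sum_(i < m) powR (eta i) q * powR (enorm (y - x i)) q.

Definition T1 (R : realType) (d m : nat) (q : R) (x : 'I_m -> 'rV[R]_d)
  (eta : 'I_m -> R) (y : 'rV[R]_d) : 'rV[R]_d :=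
  if [exists i, y == x i] then y
  else (\sum_(i < m) powR (eta i) q * powR (enorm (y - x i)) (q - 2))^-1 *:
       \sum_(i < m) (powR (eta i) q * powR (enorm (y - x i)) (q - 2)) *: x i.

Definition collinear (R : realType) (d m : nat) (x : 'I_m -> 'rV[R]_d) : Prop :=
  exists (p v : 'rV[R]_d), v != 0 /\ forall i, exists t : R, x i = p + t *: v.

(* Near x_k, T1(y) - x_k = V(y) / S(y) with V(y) = sum_i w_i(y) (x_i - x_k) and
   S(y) = sum_i w_i(y), where w_i(y) = eta_i^q |y - x_i|^(q-2).  As y -> x_k,
   V(y) tends to resid = V(x_k), while S(y) is dominated by the weight
   eta_k^q r^(q-2) of x_k itself (r = |y - x_k|), which blows up since q < 2.
   Because x_k is not the minimizer M (strict midpoint convexity of C_q, the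
   data not being collinear), the tangent bound
     C_q(z) >= C_q(x_k) - q <resid, z - x_k> + eta_k^q |z - x_k|^q
   at z = M forces |resid| > eta_k^q if q = 1 and resid <> 0 if q > 1.  Either
   way |T1(y) - x_k| >= c r for some c > 1 on a punctured ball around x_k, and
   an orbit that keeps expanding like this must leave the ball. *)

From mathcomp Require Import all_boot all_order all_algebra.
From mathcomp Require Import all_classical all_reals.
From mathcomp Require Import sequences exp.
From mathcomp Require Import ring lra.
Import Order.TTheory GRing.Theory Num.Theory.
Local Open Scope ring_scope.

Section PowRInequalities.
Context {R : realType}.
Implicit Types a b p s t : R.

(* Young's inequality [a b^(p-1) <= a^p / p + b^p (p-1) / p] in disguise. *)
Lemma ge1_powR_tangent p a b : 1 <= p -> 0 <= a -> 0 < b ->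
  b `^ p + p * b `^ (p - 1) * (a - b) <= a `^ p.
Proof.
move=> p1 a0 b0.
have [->|pn1] := eqVneq p 1.
  by rewrite subrr powRr0 !powRr1 ?(ltW b0) // !mul1r; lra.
have p1' : 1 < p by rewrite lt_neqAle eq_sym pn1.
have p0 : 0 < p by lra.
have pm0 : 0 < p - 1 by lra.
have pq : p^-1 + (p / (p - 1))^-1 = 1.
  by rewrite invf_div -{1}(div1r p) -mulrDl subrKC mulfV // gt_eqF.
have := conjugate_powR a0 (powR_ge0 b (p - 1)) p0 (divr_gt0 p0 pm0) pq.
rewrite -powRrM mulrCA mulfV ?gt_eqF // mulr1.
have -> : a `^ p / p + b `^ p / (p / (p - 1)) = (a `^ p + (p - 1) * b `^ p) / p.
  by field; rewrite (gt_eqF p0) (gt_eqF pm0).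
rewrite ler_pdivlMr // -(mulr_powRB1 (ltW b0) p0).
set B := b `^ (p - 1); nra.
Qed.

Lemma le0_powR_tangent p a b : p <= 0 -> 0 < a -> 0 < b ->
  b `^ p + p * b `^ (p - 1) * (a - b) <= a `^ p.
Proof.
move=> p0 a0 b0.
have bp0 : 0 < b `^ p by rewrite powR_gt0.
have ebp : b `^ (p - 1) = b `^ p / b.
  by rewrite powRB ?powRr1 ?(ltW b0) // (gt_eqF b0) implybT.
have eap : a `^ p = b `^ p * expR (p * (ln a - ln b)).
  by rewrite /powR (gt_eqF a0) (gt_eqF b0) -expRD; f_equal; ring.
have ln_le : ln a - ln b <= a / b - 1.
  rewrite -ln_div ?posrE //; have := expR_ge1Dx (ln (a / b)).
  by rewrite lnK ?posrE ?divr_gt0 //; lra.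
have := expR_ge1Dx (p * (ln a - ln b)).
rewrite eap ebp.
have -> : b `^ p + p * (b `^ p / b) * (a - b) = b `^ p * (1 + p * (a / b - 1)).
  by field; rewrite gt_eqF.
rewrite ler_pM2l //; nra.
Qed.

Lemma lt0_ger_powR p s t : p < 0 -> 0 < t -> t <= s -> s `^ p <= t `^ p.
Proof.
move=> p0 t0 ts.
have powRE u : u `^ p = (u `^ (- p))^-1 by rewrite -powRN opprK.
rewrite !powRE lef_pV2 ?posrE ?powR_gt0 //; last lra.
by apply: ge0_ler_powR; rewrite ?nnegrE; lra.
Qed.

Lemma le0_powR_lipschitz p b s t : p <= 0 -> 0 < b -> b <= s -> b <= t ->
  `| t `^ p - s `^ p | <= - p * b `^ (p - 1) * `| t - s |.
Proof.
move=> p0 b0 bs bt.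
wlog ts : s t bs bt / s <= t.
  move=> W; have /orP[|] := le_total s t; first exact: W.
  by rewrite (distrC (t `^ p)) (distrC t); apply: W.
have s0 : 0 < s by lra.
have t0 : 0 < t by lra.
have tang_t := le0_powR_tangent p t s p0 t0 s0.
have tang_s := le0_powR_tangent p s t p0 s0 t0.
have pts : 0 <= - p * (t - s) by apply: mulr_ge0; lra.
have ts_p : t `^ p <= s `^ p.
  by have := mulr_ge0 pts (powR_ge0 t (p - 1)); nra.
have sb : s `^ (p - 1) <= b `^ (p - 1) by apply: lt0_ger_powR; lra.
rewrite ler0_norm ?subr_le0 // ger0_norm ?subr_ge0 //.
by have := ler_wpM2l pts sb; nra.
Qed.

Lemma ge1_powR_midpoint p a b : 1 <= p -> 0 <= a -> 0 <= b ->
  ((a + b) / 2) `^ p <= (a `^ p + b `^ p) / 2.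
Proof.
move=> p1 a0 b0.
have [ab0|ab0] := eqVneq ((a + b) / 2) 0.
  have [-> ->] : a = 0 /\ b = 0 by lra.
  by rewrite addr0 mul0r powR0 ?addr0 ?mul0r // gt_eqF //; lra.
have abp : 0 < (a + b) / 2 by rewrite lt_def ab0 /=; lra.
have := ge1_powR_tangent p a _ p1 a0 abp.
have := ge1_powR_tangent p b _ p1 b0 abp.
lra.
Qed.

End PowRInequalities.

Arguments ge1_powR_tangent {R p a b}.
Arguments lt0_ger_powR {R p s t}.
Arguments le0_powR_lipschitz {R p b s t}.
Arguments ge1_powR_midpoint {R p a b}.

Section EuclideanNorm.
Context {R : realType} {d : nat}.
Implicit Types (a b : R) (u v w : 'rV[R]_d).

Definition dot u v : R := \sum_(i < d) u ord0 i * v ord0 i.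

Lemma dotC u v : dot u v = dot v u.
Proof. by apply: eq_bigr => i _; rewrite mulrC. Qed.

Lemma dotDl u v w : dot (u + v) w = dot u w + dot v w.
Proof. by rewrite /dot -big_split; apply: eq_bigr => i _; rewrite mxE mulrDl. Qed.

Lemma dotZl a u w : dot (a *: u) w = a * dot u w.
Proof. by rewrite /dot mulr_sumr; apply: eq_bigr => i _; rewrite mxE mulrA. Qed.

Lemma dotBl u v w : dot (u - v) w = dot u w - dot v w.
Proof. by rewrite dotDl -scaleN1r dotZl mulN1r. Qed.

Lemma dotDr u v w : dot w (u + v) = dot w u + dot w v.
Proof. by rewrite dotC dotDl !(dotC w). Qed.

Lemma dotZr a u w : dot w (a *: u) = a * dot w u.
Proof. by rewrite dotC dotZl dotC. Qed.

Lemma dotBr u v w : dot w (u - v) = dot w u - dot w v.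
Proof. by rewrite dotC dotBl !(dotC w). Qed.

Lemma dot0l w : dot 0 w = 0.
Proof. by rewrite -(scale0r 0) dotZl mul0r. Qed.

Lemma dot_suml m (f : 'I_m -> 'rV[R]_d) w :
  dot (\sum_(j < m) f j) w = \sum_(j < m) dot (f j) w.
Proof.
elim/big_rec2: _ => [|j u s _ <-]; last exact: dotDl.
by rewrite dot0l.
Qed.

Lemma dotvv_ge0 v : 0 <= dot v v.
Proof. by apply: sumr_ge0 => i _; rewrite -expr2 sqr_ge0. Qed.

Lemma dotvv_eq0 v : dot v v = 0 -> v = 0.
Proof.
move=> /eqP; rewrite psumr_eq0 => [/allP v0|i _]; last by rewrite -expr2 sqr_ge0.
apply/rowP => i; rewrite !mxE; have := v0 i (mem_index_enum _).
by rewrite mulf_eq0 orbb => /eqP.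
Qed.

Lemma enormE v : enorm v = Num.sqrt (dot v v).
Proof. by congr Num.sqrt; apply: eq_bigr => i _; rewrite expr2. Qed.

Lemma enorm_ge0 v : 0 <= enorm v.
Proof. by rewrite enormE sqrtr_ge0. Qed.

Lemma enorm_sqr v : enorm v ^+ 2 = dot v v.
Proof. by rewrite enormE sqr_sqrtr // dotvv_ge0. Qed.

Lemma enorm0 : enorm (0 : 'rV[R]_d) = 0.
Proof. by rewrite enormE dot0l sqrtr0. Qed.

Lemma enorm_eq0 v : enorm v = 0 -> v = 0.
Proof. by move=> v0; apply: dotvv_eq0; rewrite -enorm_sqr v0 expr0n. Qed.

Lemma enorm_gt0 v : v != 0 -> 0 < enorm v.
Proof.
move=> v0; rewrite lt_def enorm_ge0 andbT.
by apply: contraNneq v0 => /enorm_eq0 ->.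
Qed.

Lemma enormZ a v : enorm (a *: v) = `|a| * enorm v.
Proof. by rewrite !enormE dotZl dotZr mulrA -expr2 sqrtrM ?sqr_ge0 // sqrtr_sqr. Qed.

Lemma enorm_dist u v : enorm (u - v) = enorm (v - u).
Proof. by rewrite -opprB -scaleN1r enormZ normrN1 mul1r. Qed.

(* Expanding this square is the classical proof of Cauchy-Schwarz, and its
   vanishing characterizes the equality case. *)
Lemma dot_scaled_sub u v :
  dot (enorm v *: u - enorm u *: v) (enorm v *: u - enorm u *: v)
  = 2 * enorm u * enorm v * (enorm u * enorm v - dot u v).
Proof. by rewrite !dotBl !dotBr !dotZl !dotZr -!enorm_sqr (dotC v u); ring. Qed.

Lemma cauchy_schwarz u v : dot u v <= enorm u * enorm v.
Proof.
have [u0|/enorm_gt0 pu] := eqVneq u 0; first by rewrite u0 dot0l enorm0 mul0r.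
have [v0|/enorm_gt0 pv] := eqVneq v 0.
  by rewrite v0 dotC dot0l enorm0 mulr0.
have := dotvv_ge0 (enorm v *: u - enorm u *: v).
by rewrite dot_scaled_sub pmulr_rge0 ?subr_ge0 // !mulr_gt0.
Qed.

Lemma enormD u v : enorm (u + v) <= enorm u + enorm v.
Proof.
rewrite -(ler_pXn2r (n := 2)) // ?nnegrE ?addr_ge0 ?enorm_ge0 //.
rewrite enorm_sqr dotDl !dotDr -!enorm_sqr (dotC v u).
by have := cauchy_schwarz u v; nra.
Qed.

Lemma enormD_eq u v : enorm (u + v) = enorm u + enorm v ->
  enorm v *: u = enorm u *: v.
Proof.
move=> /(congr1 (fun r => r ^+ 2)) /=.
rewrite enorm_sqr dotDl !dotDr -!enorm_sqr (dotC v u) => uv.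
have {}uv : dot u v = enorm u * enorm v by nra.
apply/eqP; rewrite -subr_eq0; apply/eqP/dotvv_eq0.
by rewrite dot_scaled_sub uv subrr mulr0.
Qed.

Lemma enorm_sum m (f : 'I_m -> 'rV[R]_d) :
  enorm (\sum_(j < m) f j) <= \sum_(j < m) enorm (f j).
Proof.
elim/big_rec2: _ => [|j u s _ us]; first by rewrite enorm0.
by apply: le_trans (enormD _ _) _; rewrite lerD2l.
Qed.

Lemma enorm_dist_ge u v : `| enorm u - enorm v | <= enorm (u - v).
Proof.
have := enormD (u - v) v; have := enormD (v - u) u.
by rewrite !subrK enorm_dist ler_norml; lra.
Qed.

Lemma scaled_sub_on_line a b (e M y : 'rV[R]_d) : a != 0 -> M != e ->
  a *: (M - y) = b *: (e - y) -> exists t, y = e + t *: (M - e).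
Proof.
move=> a0 Me ab.
have [ba|ab0] := eqVneq a b.
  have : a *: (M - e) = 0.
    have -> : M - e = (M - y) - (e - y) by rewrite opprB addrA subrK.
    by rewrite scalerBr ab ba subrr.
  by move/eqP; rewrite scaler_eq0 (negbTE a0) subr_eq0 (negbTE Me).
have ab0' : a - b != 0 by rewrite subr_eq0.
exists (a / (a - b)); apply/rowP => j.
have := congr1 (fun w : 'rV[R]_d => w ord0 j) ab; rewrite /= !mxE => abj.
apply: (mulIf ab0'); rewrite mulrDl mulrAC divfK //; lra.
Qed.

End EuclideanNorm.

Section Escape.
Context {R : realType} {V : Type} {f : V -> V} {N : V -> R} {delta c : R}.
Hypotheses (c_gt1 : 1 < c)
  (f_expands : forall y, 0 < N y -> N y < delta -> c * N y <= N (f y)).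

(* While the orbit stays in the ball, [N] grows at least linearly. *)
Lemma iter_leaves y : 0 < N y -> exists n, ~ N (iter n f y) < delta.
Proof.
move=> y0; apply: contrapT => stay.
have inside n : N (iter n f y) < delta by apply: contrapT => out; apply: stay; exists n.
have cy0 : 0 < (c - 1) * N y by rewrite mulr_gt0 // subr_gt0.
have grow n : N y + n%:R * ((c - 1) * N y) <= N (iter n f y).
  elim: n => [|n IH]; first by rewrite mul0r addr0.
  have Ny_le : N y <= N (iter n f y).
    by apply: le_trans IH; rewrite lerDl mulr_ge0 // ltW.
  have := f_expands _ (lt_le_trans y0 Ny_le) (inside n).
  rewrite iterS -natr1; nra.
have B0 : 0 <= delta / ((c - 1) * N y).
  by rewrite divr_ge0 ?ltW //; apply: lt_trans (inside 0%N).
have := archi_boundP B0; set n := Num.Def.archi_bound _.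
rewrite ltr_pdivrMr // => lt_n.
by have := grow n; have := inside n; lra.
Qed.

Lemma iter_exits y : 0 < N y -> N y < delta ->
  exists s : nat, (1 <= s)%N /\
    (forall j : nat, (j < s)%N -> N (iter j f y) < delta) /\ ~ N (iter s f y) < delta.
Proof.
move=> y0 yd.
have [|s out s_min] := @ex_minnP (fun n => ~~ (N (iter n f y) < delta)).
  by have [n out] := iter_leaves _ y0; exists n; apply/negP.
exists s; split; last split.
- by case: s out {s_min} => //=; rewrite yd.
- by move=> j js; apply: contraTT js => /s_min; rewrite -leqNgt.
- exact/negP.
Qed.

End Escape.

Section WeiszfeldNearDataPoint.
Variables (R : realType) (d m : nat) (x : 'I_m -> 'rV[R]_d) (eta : 'I_m -> R).
Variables (q : R) (M : 'rV[R]_d) (k : 'I_m).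
Hypotheses (x_inj : injective x) (x_ncol : ~ collinear x)
  (eta_gt0 : forall i, 0 < eta i) (q_ge1 : 1 <= q) (q_lt2 : q < 2)
  (M_min : forall y, Cq q x eta M <= Cq q x eta y) (xk_neqM : x k != M).
Implicit Types (y z : 'rV[R]_d).

Local Notation e := (x k).
Local Notation cost y i := (powR (eta i) q * powR (enorm (y - x i)) q).
Local Notation wt y i := (powR (eta i) q * powR (enorm (y - x i)) (q - 2)).
Local Notation resid := (\sum_(i < m) wt e i *: (x i - e)).

Let q_gt0 : 0 < q. Proof. exact: lt_le_trans ltr01 q_ge1. Qed.

Lemma data_dist_gt0 i : i != k -> 0 < enorm (e - x i).
Proof. by move=> ik; rewrite enorm_gt0 // subr_eq0 (inj_eq x_inj) eq_sym. Qed.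

Section Midpoint.
Local Notation z := (2^-1 *: (M + e)).

Let midpoint_dist i : enorm (z - x i) = 2^-1 * enorm ((M - x i) + (e - x i)).
Proof.
have -> : z - x i = 2^-1 *: ((M - x i) + (e - x i)).
  by apply/rowP => j; rewrite !mxE; field.
by rewrite enormZ ger0_norm ?invr_ge0 ?ler0n.
Qed.

Let midpoint_dist_le i :
  enorm (z - x i) <= (enorm (M - x i) + enorm (e - x i)) / 2.
Proof.
by rewrite midpoint_dist mulrC; apply: ler_wpM2r; rewrite ?invr_ge0 ?ler0n ?enormD.
Qed.

Let midpoint_powR_le i :
  enorm (z - x i) `^ q <= ((enorm (M - x i) + enorm (e - x i)) / 2) `^ q.
Proof.
apply: ge0_ler_powR (midpoint_dist_le i); rewrite ?nnegrE ?(ltW q_gt0) ?enorm_ge0 //.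
by rewrite divr_ge0 ?addr_ge0 ?enorm_ge0.
Qed.

Lemma cost_midpoint_le i : cost z i <= (cost M i + cost e i) / 2.
Proof.
rewrite -mulrDr -mulrA ler_wpM2l ?powR_ge0 //.
exact: le_trans (midpoint_powR_le i) (ge1_powR_midpoint q_ge1 (enorm_ge0 _) (enorm_ge0 _)).
Qed.

Lemma cost_midpoint_eq i : cost z i = (cost M i + cost e i) / 2 ->
  exists t, x i = e + t *: (M - e).
Proof.
rewrite -mulrDr -mulrA => /(mulfI (lt0r_neq0 (powR_gt0 q (eta_gt0 i)))) eq_avg.
have [<-|xie] := eqVneq e (x i); first by exists 0; rewrite scale0r addr0.
set a := M - x i; set b := e - x i.
have eq_pow : enorm (z - x i) `^ q = ((enorm a + enorm b) / 2) `^ q.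
  apply/eqP; rewrite eq_le midpoint_powR_le eq_avg.
  exact: ge1_powR_midpoint q_ge1 (enorm_ge0 _) (enorm_ge0 _).
have eq_dist : enorm (z - x i) = (enorm a + enorm b) / 2.
  apply: (powR_injective q_gt0) eq_pow; rewrite nnegrE ?enorm_ge0 //.
  by rewrite divr_ge0 ?addr_ge0 ?enorm_ge0.
have : enorm (a + b) = enorm a + enorm b.
  by move: eq_dist; rewrite midpoint_dist mulrC => /mulIf; apply; rewrite invr_eq0 pnatr_eq0.
move/enormD_eq; apply: scaled_sub_on_line; last by rewrite eq_sym.
by rewrite gt_eqF // enorm_gt0 // subr_eq0.
Qed.
End Midpoint.

(* Midpoint convexity is strict off a line, so [x k] cannot be a minimizer
   without all data points lying on the line through [x k] and [M]. *)
Lemma Cq_lt_data : Cq q x eta M < Cq q x eta e.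
Proof.
rewrite ltNge; apply/negP => le_eM.
set z := 2^-1 *: (M + e).
have gap_ge0 i : 0 <= (cost M i + cost e i) / 2 - cost z i.
  by rewrite subr_ge0 cost_midpoint_le.
have gap_sum : \sum_(i < m) ((cost M i + cost e i) / 2 - cost z i) = 0.
  apply/eqP; rewrite eq_le sumr_ge0 ?andbT // sumrB -mulr_suml big_split /=.
  by rewrite subr_le0 addrC; exact: le_trans (midf_le le_eM).2 (M_min z).
apply: x_ncol; exists e, (M - e); split; first by rewrite subr_eq0 eq_sym.
move=> i; apply: cost_midpoint_eq; apply/eqP; rewrite eq_sym -subr_eq0; apply/eqP.
exact: (psumr_eq0P (fun i _ => gap_ge0 i) gap_sum).
Qed.

Lemma cost_ge_tangent i z : i != k ->
  cost e i - q * dot (wt e i *: (x i - e)) (z - e) <= cost z i.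
Proof.
move=> ik; set b := enorm (e - x i); set D := dot (e - x i) (z - e).
have b0 : 0 < b := data_dist_gt0 _ ik.
have cs : D <= b * (enorm (z - x i) - b).
  have dot_split : dot (e - x i) (z - x i) = D + b ^+ 2.
    have -> : z - x i = (z - e) + (e - x i) by rewrite addrA subrK.
    by rewrite dotDr enorm_sqr.
  by have := cauchy_schwarz (e - x i) (z - x i); rewrite -/b dot_split mulrBr -expr2; lra.
have pow_split : b `^ (q - 1) = b `^ (q - 2) * b.
  have -> : q - 1 = (q - 2) + 1 by ring.
  by rewrite powRD ?powRr1 ?(ltW b0) // (gt_eqF b0) implybT.
have tangent := ge1_powR_tangent q_ge1 (enorm_ge0 (z - x i)) b0.
rewrite pow_split in tangent.
have -> : dot (wt e i *: (x i - e)) (z - e) = - (wt e i * D).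
  have -> : x i - e = (-1) *: (e - x i) by rewrite scaleN1r opprB.
  by rewrite !dotZl -/D mulN1r mulrN.
rewrite [leLHS](_ : _ = eta i `^ q * (b `^ q + q * b `^ (q - 2) * D)); last by ring.
rewrite ler_wpM2l ?powR_ge0 //.
apply: le_trans tangent; rewrite lerD2l.
rewrite [leRHS](_ : _ = q * b `^ (q - 2) * (b * (enorm (z - x i) - b))); last by ring.
by apply: ler_wpM2l cs; rewrite mulr_ge0 ?powR_ge0 ?(ltW q_gt0).
Qed.

Lemma Cq_ge_tangent z :
  Cq q x eta e - q * dot resid (z - e) + eta k `^ q * enorm (z - e) `^ q
  <= Cq q x eta z.
Proof.
have k_summand : cost e k - q * dot (wt e k *: (x k - e)) (z - e) = 0.
  by rewrite !subrr scaler0 dot0l mulr0 subr0 enorm0 (powR0 (lt0r_neq0 q_gt0)) mulr0.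
rewrite /Cq dot_suml mulr_sumr -sumrB -(@big_rmcond _ _ _ _ _ (fun i => i != k)); last first.
  by move=> i /negPn /eqP ->.
rewrite [leRHS](bigD1 k) //= [leRHS]addrC lerD2r.
by apply: ler_sum => i ik; apply: cost_ge_tangent.
Qed.

Lemma resid_neq0 : resid != 0.
Proof.
apply/eqP => R0; have := Cq_lt_data; rewrite ltNge => /negP; apply.
apply: le_trans (Cq_ge_tangent M); rewrite R0 dot0l mulr0 subr0 lerDl.
by rewrite mulr_ge0 ?powR_ge0.
Qed.

Lemma eta_lt_enorm_resid : q = 1 -> eta k `^ q < enorm resid.
Proof.
move=> q1; rewrite ltNge; apply/negP => le_resid.
have := Cq_lt_data; rewrite ltNge => /negP; apply.
apply: le_trans (Cq_ge_tangent M); rewrite -addrA lerDl addrC subr_ge0.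
have -> : q * dot resid (M - e) = dot resid (M - e) by rewrite q1 mul1r.
have -> : enorm (M - e) `^ q = enorm (M - e) by rewrite q1 powRr1 // enorm_ge0.
by apply: le_trans (cauchy_schwarz _ _) _; apply: ler_wpM2r; rewrite ?enorm_ge0.
Qed.

(* [eta k ^ q r ^ (q - 1)] is [r] times the weight of [x k] in [T1 y], where
   [r = |y - x k|]. *)
Lemma resid_dominates : exists a, [/\ 0 < a, a < enorm resid &
  exists2 h, 0 < h & forall r, 0 < r -> r < h -> eta k `^ q * r `^ (q - 1) <= a].
Proof.
have eta_q0 : 0 < eta k `^ q by rewrite powR_gt0.
have [q1|q_neq1] := eqVneq q 1.
  exists (eta k `^ q); split => //; first exact: eta_lt_enorm_resid.
  by exists 1 => // r r0 _; rewrite q1 subrr powRr0 mulr1.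
have q1 : 0 < q - 1 by rewrite subr_gt0 lt_neqAle eq_sym q_neq1.
have L0 : 0 < enorm resid := enorm_gt0 _ resid_neq0.
exists (enorm resid / 2); split; [by rewrite divr_gt0 | by rewrite ltr_pdivrMr // ltr_pMr // ltr1n |].
set a := enorm resid / 2; have a0 : 0 < a by rewrite divr_gt0.
exists ((a / eta k `^ q) `^ (q - 1)^-1) => [|r r0 rh]; first by rewrite powR_gt0 // divr_gt0.
have := gt0_ltr_powR q1 (ltW r0) (ltW (lt_trans r0 rh)) rh.
rewrite -powRrM mulVf ?gt_eqF // powRr1 ?(divr_ge0 (ltW a0) (ltW eta_q0)) // => /ltW le_r.
by move: le_r; rewrite ler_pdivlMr // mulrC.
Qed.

Lemma data_separated : exists2 h, 0 < h &
  forall y i, i != k -> enorm (y - e) < h -> h <= enorm (y - x i).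
Proof.
pose beta := \big[Num.min/1]_(i | i != k) enorm (e - x i).
have beta0 : 0 < beta by apply: lt_bigmin => // i; exact: data_dist_gt0.
exists (beta / 2) => [|y i ik ye]; first by rewrite divr_gt0.
have le_beta : beta <= enorm (e - x i) by exact: bigmin_le_cond.
have := enorm_dist_ge (y - x i) (e - x i).
rewrite opprB addrA subrK ler_norml => /andP[+ _].
by move: ye le_beta; set u := enorm (y - e); set v := enorm (y - x i); set w := enorm (e - x i); lra.
Qed.

Lemma sum_wt_gt0 y : (forall i, y != x i) -> 0 < \sum_(i < m) wt y i.
Proof.
move=> y_ndata; rewrite (bigD1 k) //= ltr_wpDr ?sumr_ge0 // => [i _|].
  by rewrite mulr_ge0 ?powR_ge0.
by rewrite mulr_gt0 ?powR_gt0 // enorm_gt0 // subr_eq0.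
Qed.

Lemma T1_subE y : (forall i, y != x i) ->
  T1 q x eta y - e = (\sum_(i < m) wt y i)^-1 *: \sum_(i < m) wt y i *: (x i - e).
Proof.
move=> y_ndata; have S0 := sum_wt_gt0 _ y_ndata; rewrite /T1.
have -> : [exists i, y == x i] = false.
  by apply/negbTE/existsPn => i; exact: y_ndata.
have -> : \sum_(i < m) wt y i *: (x i - e) =
          \sum_(i < m) wt y i *: x i - (\sum_(i < m) wt y i) *: e.
  by rewrite scaler_suml -sumrB; apply: eq_bigr => i _; rewrite scalerBr.
by rewrite /= scalerBr scalerA mulVf ?scale1r // gt_eqF.
Qed.

Lemma wt_central y : 0 < enorm (y - e) ->
  enorm (y - e) * wt y k = eta k `^ q * enorm (y - e) `^ (q - 1).
Proof.
move=> y0; rewrite mulrCA; congr (_ * _).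
have -> : q - 1 = (q - 2) + 1 by ring.
rewrite [RHS]powRD ?(gt_eqF y0) ?implybT //.
by rewrite powRr1 ?(ltW y0) // mulrC.
Qed.

Section NearDataPoint.
Variable h : R.
Hypotheses (h_gt0 : 0 < h)
  (h_sep : forall y i, i != k -> enorm (y - e) < h -> h <= enorm (y - x i)).

Lemma near_neq_data y : 0 < enorm (y - e) -> enorm (y - e) < h ->
  forall i, y != x i.
Proof.
move=> y0 yh i; have [->|ik] := eqVneq i k.
  by apply: contraTneq y0 => ->; rewrite subrr enorm0 ltxx.
by apply: contraTneq (h_sep _ _ ik yh) => ->; rewrite subrr enorm0 -ltNge.
Qed.

Lemma sum_wt_near y : enorm (y - e) < h ->
  \sum_(i < m) wt y i <= wt y k + \sum_(i < m | i != k) eta i `^ q * h `^ (q - 2).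
Proof.
move=> yh; rewrite (bigD1 k) //= lerD2l.
apply: ler_sum => i ik; rewrite ler_wpM2l ?powR_ge0 //.
by apply: lt0_ger_powR (h_sep _ _ ik yh) => //; rewrite subr_lt0.
Qed.

Lemma resid_near : exists2 K, 0 <= K & forall y, enorm (y - e) < h ->
  enorm (\sum_(i < m) wt y i *: (x i - e) - resid) <= K * enorm (y - e).
Proof.
pose K := (2 - q) * h `^ (q - 3) * \sum_(i < m) eta i `^ q * enorm (x i - e).
exists K => [|y yh].
  apply: mulr_ge0; first by rewrite mulr_ge0 ?powR_ge0 // subr_ge0 ltW.
  by apply: sumr_ge0 => i _; rewrite mulr_ge0 ?powR_ge0 ?enorm_ge0.
rewrite -sumrB; apply: le_trans (enorm_sum _ _) _.
rewrite [K * _]mulrC /K !mulr_sumr; apply: ler_sum => i _.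
rewrite -scalerBl enormZ -mulrBr normrM ger0_norm ?powR_ge0 //.
have [->|ik] := eqVneq i k; first by rewrite (subrr (x k)) enorm0 !mulr0.
have b_sep : h <= enorm (e - x i) by apply: h_sep ik _; rewrite subrr enorm0.
have q2_le0 : q - 2 <= 0 by rewrite subr_le0 ltW.
have lip := le0_powR_lipschitz q2_le0 h_gt0 b_sep (h_sep _ _ ik yh).
rewrite opprB (_ : q - 2 - 1 = q - 3) in lip; last by ring.
have dist_le : `|enorm (y - x i) - enorm (e - x i)| <= enorm (y - e).
  by have := enorm_dist_ge (y - x i) (e - x i); rewrite opprB addrA subrK.
rewrite [leRHS](_ : _ = eta i `^ q * ((2 - q) * h `^ (q - 3) * enorm (y - e))
  * enorm (x i - e)); last by ring.
rewrite ler_wpM2r ?enorm_ge0 // ler_wpM2l ?powR_ge0 //.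
apply: le_trans lip _.
by rewrite ler_wpM2l // mulr_ge0 ?powR_ge0 // subr_ge0 ltW.
Qed.

End NearDataPoint.

Lemma T1_expands : exists delta c, [/\ 0 < delta, 1 < c & forall y,
  0 < enorm (y - e) -> enorm (y - e) < delta ->
  c * enorm (y - e) <= enorm (T1 q x eta y - e)].
Proof.
have [h h0 h_sep] := data_separated.
have [a [a0 aL [h2 h20 wt_le_a]]] := resid_dominates.
have [K K0 resid_le] := resid_near h h0 h_sep.
set L := enorm resid in aL; set W := \sum_(i < m | i != k) eta i `^ q * h `^ (q - 2).
have W0 : 0 <= W by apply: sumr_ge0 => i _; rewrite mulr_ge0 ?powR_ge0.
pose c := (L + a) / (2 * a).
have ca : c * a = (L + a) / 2 by rewrite /c mulrAC -mulf_div divff ?gt_eqF // mulr1.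
have c1 : 1 < c by rewrite /c ltr_pdivlMr ?mulr_gt0 // mul1r; lra.
have c0 : 0 < c := lt_trans ltr01 c1.
have cWK0 : 0 < c * W + K + 1 by rewrite ltr_wpDl // addr_ge0 // mulr_ge0 // ltW.
pose d3 := (L - a) / 2 / (c * W + K + 1).
have d30 : 0 < d3 by rewrite !divr_gt0 // subr_gt0.
exists (Num.min h (Num.min h2 d3)), c; split => //; first by rewrite !lt_min h0 h20.
move=> y r0; rewrite !lt_min => /and3P[rh rh2 rd3].
set r := enorm (y - e) in r0 rh rh2 rd3 *.
have y_ndata := near_neq_data h h0 h_sep y r0 rh.
have S0 := sum_wt_gt0 _ y_ndata.
rewrite T1_subE // enormZ ger0_norm ?invr_ge0 ?(ltW S0) // [leRHS]mulrC.
rewrite (ler_pdivlMr _ _ S0).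
set S := \sum_(i < m) wt y i; set V := \sum_(i < m) wt y i *: (x i - e).
have rS : r * S <= a + r * W.
  have rk_le := wt_le_a r r0 rh2; rewrite -wt_central // -/r in rk_le.
  apply: le_trans (ler_wpM2l (ltW r0) (sum_wt_near h h0 h_sep y rh)) _.
  by rewrite mulrDr lerD2r.
have V_ge : L - K * r <= enorm V.
  have := enorm_dist_ge resid V; rewrite ler_norml enorm_dist => /andP[_ LV].
  by rewrite lerBlDr -lerBlDl; apply: le_trans LV (resid_le y rh).
have r_small : c * (r * W) + K * r <= (L - a) / 2.
  rewrite [leLHS](_ : _ = r * (c * W + K)); last by ring.
  apply: (@le_trans _ _ (r * (c * W + K + 1))); first by rewrite ler_wpM2l ?(ltW r0) // lerDl.
  by rewrite -ler_pdivlMr // ltW.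
apply: le_trans V_ge; rewrite -mulrA.
apply: le_trans (ler_wpM2l (ltW c0) rS) _; rewrite mulrDr ca lerBrDr -addrA.
rewrite [leRHS](_ : L = (L + a) / 2 + (L - a) / 2); last by field.
by rewrite lerD2l.
Qed.

End WeiszfeldNearDataPoint.

Theorem lemma3 (R : realType) (d m : nat) (x : 'I_m -> 'rV[R]_d)
  (eta : 'I_m -> R) (q : R) (M : 'rV[R]_d) (k : 'I_m) :
  injective x ->
  ~ collinear x ->
  (forall i, 0 < eta i) ->
  1 <= q -> q < 2 ->
  (forall y, Cq q x eta M <= Cq q x eta y) ->
  x k != M ->
  exists delta0 : R, 0 < delta0 /\
    forall y : 'rV[R]_d, enorm (y - x k) < delta0 -> y != x k ->
      exists s : nat, (1 <= s)%N /\
        (forall j : nat, (j < s)%N -> enorm (iter j (T1 q x eta) y - x k) < delta0) /\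
        ~ (enorm (iter s (T1 q x eta) y - x k) < delta0).
Proof.
move=> x_inj x_ncol eta_gt0 q_ge1 q_lt2 M_min xk_neqM.
have [delta [c [delta0 c1 T1_exp]]] :=
  T1_expands _ _ _ _ _ _ _ _ x_inj x_ncol eta_gt0 q_ge1 q_lt2 M_min xk_neqM.
exists delta; split => // y y_near y_neq.
by apply: (iter_exits c1 T1_exp) => //; rewrite enorm_gt0 // subr_eq0.
Qed.
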